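(* Let $R\ge1$, $\mathbf{x}=(x_1,\dots,x_R)$ pairwise distinct reals and $\mathbf{c}=(c_1,\dots,c_R)\in\mathbb{R}^R$. (a) If $\mathbf{u}=(u_1,\dots,u_R)^T\in\mathbb{C}^R$ is an eigenvector of $A(\mathbf{x})$ for the eigenvalue $i\mu$ ($\mu\in\mathbb{R}$), then for every $1\le n\le R$, $$\mu^2|u_n|^2=\sum_{m=1}^R a_{m,n}^2\big(|u_m|^2+2\,\Re(u_n\overline{u_m})\big).$$ (b) If $\mathbf{u}\in\mathbb{C}^R$ is an eigenvector of $B(\mathbf{x},\mathbf{c})$ for the eigenvalue $i\mu$ ($\mu\in\mathbb{R}$), then for every $1\le n\le R$, $$\mu^2|u_n|^2=\sum_{m=1}^R a_{m,n}^2\big(c_n^2c_m^2|u_m|^2+2\,c_n^3c_m\,\Re(u_n\overline{u_m})\big).$$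
   Context: $A(\mathbf{x})$ is the $R\times R$ matrix with entries $a_{m,m}=0$ and $a_{m,n}=\frac{1}{x_m-x_n}$ for $m\ne n$. $B(\mathbf{x},\mathbf{c})$ is the $R\times R$ matrix with entries $b_{m,n}=c_mc_na_{m,n}$. Both matrices are real antisymmetric, so their eigenvalues are purely imaginary. *)

(* Complex numbers: an arbitrary numClosedFieldType C
   (e.g. algC); "real" means x \is Num.real. *)
From HB Require Import structures.
From mathcomp Require Import all_boot all_order all_algebra.
Set Implicit Arguments. Unset Strict Implicit. Unset Printing Implicit Defensive.
Import Order.TTheory GRing.Theory Num.Theory.
Local Open Scope ring_scope.

Definition matA (C : numClosedFieldType) (R : nat) (x : 'I_R -> C) : 'M[C]_R :=
  \matrix_(m < R, n < R) (if m == n then 0 else (x m - x n)^-1).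

Definition matB (C : numClosedFieldType) (R : nat) (x c : 'I_R -> C) : 'M[C]_R :=
  \matrix_(m < R, n < R) (c m * c n * matA x m n).

Definition is_eigenvector (C : numClosedFieldType) (R : nat)
  (M : 'M[C]_R) (u : 'cV[C]_R) (lam : C) : Prop :=
  u != 0 /\ M *m u = lam *: u.

From HB Require Import structures.
From mathcomp Require Import all_boot all_order all_algebra.
From mathcomp Require Import ring.
Set Implicit Arguments. Unset Strict Implicit. Unset Printing Implicit Defensive.
Import Order.TTheory GRing.Theory Num.Theory.
Local Open Scope ring_scope.

(* Write a_{mk} for the entries of A(x).  Everything rests on the
   partial-fraction identity a_{nm} a_{nk} = a_{mk} (a_{nm} - a_{nk}) for
   pairwise distinct n, m, k, which we extend to all index triples by adding
   diagonal correction terms (matA_product).  Expanding the product of the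
   n-th entries of A D U and A D V (D = diag c) with this identity and using
   antisymmetry gives an exact formula (matA_product_expansion): two sums that
   involve D A D U and D A D V again, plus an explicit "diagonal" sum.  If
   U and V are eigenvectors of B = D A D for opposite eigenvalues, the two
   sums cancel (product_of_opposite_eigenvectors).  For an eigenvector u of B
   for i mu with mu and B real, the conjugate vector is an eigenvector for
   -i mu; applying the formula to U = u, V = conj u gives part (b), and part
   (a) is the special case c = 1, since A(x) = B(x, 1). *)

Section CauchyMatrix.
Variables (C : numClosedFieldType) (R : nat) (x : 'I_R -> C).
Hypothesis x_inj : injective x.

Local Notation a := (matA x).

Lemma matAE m k : a m k = if m == k then 0 else (x m - x k)^-1.
Proof. by rewrite mxE. Qed.

(* A(x) is antisymmetric; this is what lets the two middle sums of the
   expansion below be folded back into D A D U and D A D V. *)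
Lemma matA_antisym m k : a m k = - a k m.
Proof.
rewrite !matAE eq_sym; case: eqP => _; first by rewrite oppr0.
by rewrite -invrN opprB.
Qed.

Lemma matA_real : (forall i, x i \is Num.real) -> forall m k, a m k \is Num.real.
Proof.
move=> x_real m k; rewrite matAE; case: eqP => _; first exact: real0.
by rewrite realV realB.
Qed.

Lemma x_sub_neq0 {m k} : m != k -> x m - x k != 0.
Proof. by move=> /eqP neq_mk; rewrite subr_eq0; apply/eqP => /x_inj. Qed.

Lemma matA_product n m k :
  a n m * a n k = a m k * (a n m - a n k) + (m == k)%:R * a n m ^+ 2
                  + (k == n)%:R * a n m ^+ 2 + (m == n)%:R * a n k ^+ 2.
Proof.
have [<-|neq_mk] := eqVneq m k.
  have [->|_] := eqVneq m n; first by rewrite matAE eqxx /=; ring.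
  by rewrite (matAE m m) eqxx /=; ring.
have [eq_kn|neq_kn] := eqVneq k n.
  by rewrite -eq_kn (negPf neq_mk) (matA_antisym m k) (matAE k k) eqxx /=; ring.
have [->|neq_mn] := eqVneq m n.
  by rewrite (matA_antisym n k) (matAE n n) eqxx /=; ring.
have neq_nm : n != m by rewrite eq_sym.
have neq_nk : n != k by rewrite eq_sym.
rewrite !matAE (negPf neq_nm) (negPf neq_nk) (negPf neq_mk) /=.
by field; rewrite (x_sub_neq0 neq_mk) (x_sub_neq0 neq_nm) (x_sub_neq0 neq_nk).
Qed.

Lemma sum_delta (j : 'I_R) (F : 'I_R -> C) :
  \sum_(k < R) (k == j)%:R * F k = F j.
Proof.
by rewrite (bigD1 j) //= eqxx mul1r big1 ?addr0 // => k /negPf ->; rewrite mul0r.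
Qed.

Definition matA_diag_apply (c U : 'I_R -> C) (m : 'I_R) : C :=
  \sum_(k < R) a m k * (c k * U k).

Local Notation W := matA_diag_apply.

Lemma matA_product_expansion (c U V : 'I_R -> C) n :
  W c U n * W c V n =
    \sum_(m < R) a n m * U m * (c m * W c V m)
  + \sum_(m < R) a n m * V m * (c m * W c U m)
  + \sum_(m < R) a n m ^+ 2 * (c m ^+ 2 * U m * V m
                               + c n * c m * (U n * V m + V n * U m)).
Proof.
pose P m k := (c m * U m) * (c k * V k).
have -> : W c U n * W c V n = \sum_(m < R) (
      \sum_(k < R) a n m * a m k * P m k
    - \sum_(k < R) a n k * a m k * P m k
    + \sum_(k < R) (k == m)%:R * (a n m ^+ 2 * P m k)
    + \sum_(k < R) (k == n)%:R * (a n m ^+ 2 * P m k)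
    + (m == n)%:R * \sum_(k < R) a n k ^+ 2 * P m k).
  rewrite /W mulr_suml; apply: eq_bigr => m _.
  rewrite mulr_sumr mulr_sumr -sumrB -!big_split /=; apply: eq_bigr => k _.
  rewrite (_ : _ * _ = a n m * a n k * P m k); last by rewrite /P; ring.
  by rewrite matA_product eq_sym /P; ring.
rewrite !big_split /= sumrN.
have first_sum : \sum_(m < R) \sum_(k < R) a n m * a m k * P m k
    = \sum_(m < R) a n m * U m * (c m * W c V m).
  by apply: eq_bigr => m _; rewrite /W /P mulr_sumr mulr_sumr; apply: eq_bigr => k _; ring.
have second_sum : \sum_(m < R) \sum_(k < R) a n k * a m k * P m k
    = - \sum_(m < R) a n m * V m * (c m * W c U m).
  rewrite exchange_big -sumrN; apply: eq_bigr => k _.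
  rewrite /W /P mulr_sumr mulr_sumr -sumrN; apply: eq_bigr => m _.
  by rewrite (matA_antisym m k); ring.
rewrite first_sum second_sum opprK.
under [X in _ + X + _ + _]eq_bigr => m _ do rewrite sum_delta.
under [X in _ + X + _]eq_bigr => m _ do rewrite sum_delta.
rewrite sum_delta -!addrA; congr (_ + (_ + _)).
by rewrite -!big_split /=; apply: eq_bigr => m _; rewrite /P; ring.
Qed.

Lemma product_of_opposite_eigenvectors (c U V : 'I_R -> C) (lam : C) n :
  (forall m, c m * W c U m = lam * U m) ->
  (forall m, c m * W c V m = - lam * V m) ->
  W c U n * W c V n =
    \sum_(m < R) a n m ^+ 2 * (c m ^+ 2 * U m * V m
                               + c n * c m * (U n * V m + V n * U m)).
Proof.
move=> eigU eigV; rewrite matA_product_expansion -big_split /=.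
by rewrite big1 ?add0r // => m _; rewrite eigU eigV; ring.
Qed.

End CauchyMatrix.

Lemma matB_eigen_entry (C : numClosedFieldType) (R : nat) (x c : 'I_R -> C)
    (u : 'cV[C]_R) (lam : C) :
  matB x c *m u = lam *: u ->
  forall m, c m * matA_diag_apply x c (fun k => u k 0) m = lam * u m 0.
Proof.
move=> eig m; have := congr1 (fun M : 'cV[C]_R => M m 0) eig.
rewrite [in RHS]mxE => <-; rewrite !mxE mulr_sumr.
by apply: eq_bigr => k _; rewrite !mxE; ring.
Qed.

Lemma matA_diag_apply_conj (C : numClosedFieldType) (R : nat) (x c U : 'I_R -> C) m :
  (forall i, x i \is Num.real) -> (forall i, c i \is Num.real) ->
  (c m * matA_diag_apply x c U m)^* =
    c m * matA_diag_apply x c (fun k => (U k)^*) m.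
Proof.
move=> x_real c_real; rewrite rmorphM rmorph_sum /= (conj_Creal (c_real m)).
congr (_ * _); apply: eq_bigr => k _.
by rewrite !rmorphM /= (conj_Creal (c_real k)) (conj_Creal (matA_real x_real m k)).
Qed.

Lemma matA_is_matB1 (C : numClosedFieldType) (R : nat) (x : 'I_R -> C) :
  matA x = matB x (fun _ => 1).
Proof. by apply/matrixP => i j; rewrite [RHS]mxE !mul1r. Qed.

(* Part (b) of the theorem; it holds for every solution u of B u = i mu u
   (u = 0 included).  The conjugate of u solves B v = -i mu v, and
   (i mu u_n)(-i mu conj u_n) = mu^2 |u_n|^2. *)
Lemma matB_eigen_identity (C : numClosedFieldType) (R : nat) (x c : 'I_R -> C)
    (x_real : forall i, x i \is Num.real) (c_real : forall i, c i \is Num.real)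
    (x_inj : injective x) (u : 'cV[C]_R) (mu : C) :
  mu \is Num.real -> matB x c *m u = ('i * mu) *: u ->
  forall n : 'I_R,
    mu ^+ 2 * `|u n 0| ^+ 2 =
    \sum_(m < R) (matA x m n) ^+ 2 *
      (c n ^+ 2 * c m ^+ 2 * `|u m 0| ^+ 2
       + 2 * c n ^+ 3 * c m * 'Re (u n 0 * (u m 0)^*)).
Proof.
move=> mu_real eig n.
pose U k := u k 0; pose V k := (u k 0)^*.
have eigU := matB_eigen_entry eig.
have eigV m : c m * matA_diag_apply x c V m = - ('i * mu) * V m.
  rewrite -(matA_diag_apply_conj _ _ x_real c_real) eigU rmorphM rmorphM /=.
  by rewrite conjCi (conj_Creal mu_real) mulNr.
have norm_n : mu ^+ 2 * `|u n 0| ^+ 2 = ('i * mu * U n) * (- ('i * mu) * V n).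
  rewrite normCK [RHS](_ : _ = - 'i ^+ 2 * mu ^+ 2 * (U n * V n)); last by ring.
  by rewrite sqrCi opprK mul1r.
rewrite norm_n -eigU -eigV.
rewrite (_ : _ * _ = c n ^+ 2 * (matA_diag_apply x c U n * matA_diag_apply x c V n));
  last by ring.
rewrite (product_of_opposite_eigenvectors x_inj n eigU eigV) mulr_sumr.
apply: eq_bigr => m _.
rewrite /U /V !normCK ReE rmorphM /= conjCK (matA_antisym x m n) sqrrN.
have two_neq0 : (2%:R : C) != 0 by rewrite pnatr_eq0.
by field.
Qed.

Theorem lemma5 (C : numClosedFieldType) (R : nat) (hR : (0 < R)%N)
  (x c : 'I_R -> C)
  (hxr : forall i, x i \is Num.real) (hcr : forall i, c i \is Num.real)
  (hinj : injective x) :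
  (forall (u : 'cV[C]_R) (mu : C), mu \is Num.real ->
     is_eigenvector (matA x) u ('i * mu) ->
     forall n : 'I_R,
       mu ^+ 2 * `|u n 0| ^+ 2 =
       \sum_(m < R) (matA x m n) ^+ 2 *
          (`|u m 0| ^+ 2 + 2 * 'Re (u n 0 * (u m 0)^*)))
  /\
  (forall (u : 'cV[C]_R) (mu : C), mu \is Num.real ->
     is_eigenvector (matB x c) u ('i * mu) ->
     forall n : 'I_R,
       mu ^+ 2 * `|u n 0| ^+ 2 =
       \sum_(m < R) (matA x m n) ^+ 2 *
          (c n ^+ 2 * c m ^+ 2 * `|u m 0| ^+ 2
           + 2 * c n ^+ 3 * c m * 'Re (u n 0 * (u m 0)^*))).
Proof.
split=> u mu mu_real [_ eig] n; last exact: matB_eigen_identity.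
rewrite matA_is_matB1 in eig.
have one_real (i : 'I_R) : (fun _ => 1 : C) i \is Num.real by exact: real1.
rewrite (matB_eigen_identity hxr one_real hinj mu_real eig n).
by apply: eq_bigr => m _; rewrite !expr1n !mul1r !mulr1.
Qed.
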